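(* Let $R$ and $S$ be finite connected racks, and let $T$ be a finite rack containing an element $t$ with $t\rhd t=t$ (for example, a non-empty quandle). If there exists an isomorphism of racks $R\times T\cong S\times T$, then $R\cong S$.
   Context: A rack is a set $R$ with a binary operation $\rhd$ such that every left multiplication $\ell_a\colon b\mapsto a\rhd b$ is a bijection and $a\rhd(b\rhd c)=(a\rhd b)\rhd(a\rhd c)$ for all $a,b,c$. A quandle is a rack with $a\rhd a=a$ for all $a$. The product $R\times T$ of racks is the cartesian product with componentwise operation. The inner automorphism group $\mathrm{Inn}(R)$ is the subgroup of the symmetric group on $R$ generated by all $\ell_a$; a rack is connected if it is non-empty and $\mathrm{Inn}(R)$ acts transitively on $R$. *)

From mathcomp Require Import all_boot fingroup perm.
Set Implicit Arguments. Unset Strict Implicit. Unset Printing Implicit Defensive.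

Record finRack := FinRack {
  rcar :> finType;
  rop : rcar -> rcar -> rcar;
  rop_bij : forall a : rcar, bijective (rop a);
  rop_dist : forall a b c : rcar, rop a (rop b c) = rop (rop a b) (rop a c)
}.

Definition lmul (R : finRack) (a : R) : {perm R} :=
  perm (bij_inj (rop_bij a)).

Definition Inn (R : finRack) : {group {perm R}} :=
  <<[set lmul a | a : R]>>%G.

Definition connected_rack (R : finRack) : Prop :=
  (exists x : R, True) /\
  forall x y : R, exists2 g, g \in Inn R & g x = y.

Definition prod_op (R T : finRack) (x y : (R * T)%type) : (R * T)%type :=
  (rop x.1 y.1, rop x.2 y.2).

Lemma prod_op_bij (R T : finRack) (a : (R * T)%type) : bijective (prod_op a).
Proof.
case: (rop_bij a.1) => f1 c1 c1'; case: (rop_bij a.2) => f2 c2 c2'.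
exists (fun y => (f1 y.1, f2 y.2)).
- by case=> x1 x2; rewrite /prod_op /= c1 c2.
- by case=> y1 y2; rewrite /prod_op /= c1' c2'.
Qed.

Lemma prod_op_dist (R T : finRack) (a b c : (R * T)%type) :
  prod_op a (prod_op b c) = prod_op (prod_op a b) (prod_op a c).
Proof. by rewrite /prod_op /= (rop_dist a.1) (rop_dist a.2). Qed.

Definition prod_rack (R T : finRack) : finRack :=
  @FinRack (R * T)%type (@prod_op R T) (@prod_op_bij R T) (@prod_op_dist R T).

Definition rack_iso (R S : finRack) (f : R -> S) : Prop :=
  bijective f /\ forall a b : R, f (rop a b) = rop (f a) (f b).

Definition rack_isomorphic (R S : finRack) : Prop :=
  exists f : R -> S, rack_iso f.

From mathcomp Require Import all_boot fingroup perm.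
Set Implicit Arguments. Unset Strict Implicit. Unset Printing Implicit Defensive.

(* Lovász's cancellation argument.  For a finite rack X and a relation K on X,
   let hom_K(X, A) count the homomorphisms X -> A whose kernel contains K.  This
   count is multiplicative in A, monotone under embeddings, and positive when A
   has an idempotent (take a constant map), so R x T ~ S x T forces
   hom_K(X, R) = hom_K(X, S) for every K.  Möbius inversion over the lattice of
   relations then equates the numbers of homomorphisms with kernel exactly K.
   For X = R and K the diagonal, the identity of R yields an injective
   homomorphism R -> S, which is bijective since |R| = |S|. *)

Definition rack_morph (A B : finRack) (f : A -> B) : Prop :=
  forall a b : A, f (rop a b) = rop (f a) (f b).

Lemma rack_morph_can (A B : finRack) (f : A -> B) (g : B -> A) :
  cancel f g -> cancel g f -> rack_morph f -> rack_morph g.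
Proof. by move=> fK gK fM a b; rewrite -{1}(gK a) -{1}(gK b) -fM fK. Qed.

Section HomCount.

Variable X : finRack.

Definition is_rack_hom (A : finRack) (f : {ffun X -> A}) : bool :=
  [forall a, forall b, f (rop a b) == rop (f a) (f b)].

Lemma rack_homP (A : finRack) (f : {ffun X -> A}) :
  reflect (rack_morph f) (is_rack_hom f).
Proof.
apply: (iffP forallP) => [fM a b | fM a]; first exact/eqP/(forallP (fM a)).
by apply/forallP => b; rewrite fM.
Qed.

Definition hom_ker (A : finRack) (f : {ffun X -> A}) : {set X * X} :=
  [set p | f p.1 == f p.2].

Definition homs_ker_sub (A : finRack) (K : {set X * X}) : {set {ffun X -> A}} :=
  [set f | is_rack_hom f && (K \subset hom_ker f)].

Definition homs_ker_eq (A : finRack) (K : {set X * X}) : {set {ffun X -> A}} :=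
  [set f | is_rack_hom f && (hom_ker f == K)].

Lemma card_homs_ker_sub (A : finRack) (K : {set X * X}) :
  #|homs_ker_sub A K| = \sum_(K' : {set X * X} | K \subset K') #|homs_ker_eq A K'|.
Proof.
rewrite -sum1_card (partition_big (@hom_ker A) (fun K' => K \subset K')).
  apply: eq_bigr => K' sKK'; rewrite -sum1_card; apply: eq_bigl => f.
  rewrite !inE; case: (hom_ker f =P K') => [->|_]; last by rewrite !andbF.
  by rewrite sKK' !andbT.
by move=> f; rewrite inE => /andP[].
Qed.

Lemma card_homs_ker_eq_eq (A B : finRack) :
  (forall K, #|homs_ker_sub A K| = #|homs_ker_sub B K|) ->
  forall K, #|homs_ker_eq A K| = #|homs_ker_eq B K|.
Proof.
move=> eq_sub K; have [m] := ubnP #|~: K|; elim: m K => // m IH K.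
rewrite ltnS => leKm; have := eq_sub K.
rewrite !card_homs_ker_sub (bigD1 K) ?subxx //= [in RHS](bigD1 K) ?subxx //=.
rewrite (eq_bigr (fun K' => #|homs_ker_eq B K'|)) => [/addIn //|K' /andP[sKK' neK'K]].
apply: IH; apply: leq_trans leKm; apply: proper_card.
by rewrite properC properEneq eq_sym neK'K sKK'.
Qed.

Lemma leq_card_homs_ker_sub (A B : finRack) (phi : A -> B) (K : {set X * X}) :
  injective phi -> rack_morph phi -> #|homs_ker_sub A K| <= #|homs_ker_sub B K|.
Proof.
move=> phi_inj phiM; pose comp (f : {ffun X -> A}) := [ffun x => phi (f x)].
have comp_inj : injective comp.
  by move=> f g /ffunP eq_fg; apply/ffunP => x; apply: phi_inj; have := eq_fg x; rewrite !ffunE.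
rewrite -(card_imset _ comp_inj); apply/subset_leq_card/subsetP => _ /imsetP[f + ->].
rewrite !inE => /andP[/rack_homP fM sKf]; apply/andP; split.
  by apply/rack_homP => a b; rewrite !ffunE fM phiM.
suff -> : hom_ker (comp f) = hom_ker f by [].
by apply/setP => p; rewrite !inE !ffunE inj_eq.
Qed.

Lemma card_homs_ker_sub_prod (A C : finRack) (K : {set X * X}) :
  #|homs_ker_sub (prod_rack A C) K| = #|homs_ker_sub A K| * #|homs_ker_sub C K|.
Proof.
pose pairf (gh : {ffun X -> A} * {ffun X -> C}) : {ffun X -> prod_rack A C} :=
  [ffun x => (gh.1 x, gh.2 x)].
pose unpair (f : {ffun X -> prod_rack A C}) := ([ffun x => (f x).1], [ffun x => (f x).2]).
have unpairK : cancel unpair pairf.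
  by move=> f; apply/ffunP => x; rewrite !ffunE; case: (f x).
have pairK : cancel pairf unpair.
  by case=> g h; congr pair; apply/ffunP => x; rewrite !ffunE.
rewrite -cardsX -(card_imset _ (can_inj unpairK)) (can2_imset_pre _ unpairK pairK).
apply: eq_card => -[g h]; rewrite !inE.
have -> : hom_ker (pairf (g, h)) = hom_ker g :&: hom_ker h.
  by apply/setP => p; rewrite !inE !ffunE xpair_eqE.
rewrite subsetI; have -> : is_rack_hom (pairf (g, h)) = is_rack_hom g && is_rack_hom h.
  apply/rack_homP/andP => [ghM | [/rack_homP gM /rack_homP hM] a b].
    by split; apply/rack_homP => a b; have := ghM a b; rewrite !ffunE => -[].
  by rewrite !ffunE gM hM.
by rewrite -!andbA; do !bool_congr.
Qed.

Lemma card_homs_ker_sub_gt0 (C : finRack) (t : C) (K : {set X * X}) :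
  rop t t = t -> 0 < #|homs_ker_sub C K|.
Proof.
move=> tt; apply/card_gt0P; exists [ffun=> t]; rewrite inE; apply/andP; split.
  by apply/rack_homP => a b; rewrite !ffunE tt.
by apply/subsetP => p _; rewrite inE !ffunE.
Qed.

Lemma card_homs_ker_sub_cancel (A B C : finRack) (t : C) (f : prod_rack A C -> prod_rack B C) :
  rop t t = t -> rack_iso f -> forall K, #|homs_ker_sub A K| = #|homs_ker_sub B K|.
Proof.
move=> tt [[g fK gK] fM] K; apply/eqP.
rewrite -(eqn_pmul2r (card_homs_ker_sub_gt0 K tt)) -!card_homs_ker_sub_prod eqn_leq.
rewrite (leq_card_homs_ker_sub K (can_inj fK) fM).
exact: (leq_card_homs_ker_sub K (can_inj gK) (rack_morph_can fK gK fM)).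
Qed.

End HomCount.

Lemma homs_ker_eq_diag_inj (X A : finRack) (f : {ffun X -> A}) :
  f \in homs_ker_eq A [set p | p.1 == p.2] -> injective f.
Proof.
rewrite inE => /andP[_ /eqP kerf] x y fxy.
have : (x, y) \in hom_ker f by rewrite inE fxy.
by rewrite kerf inE => /eqP.
Qed.

Theorem theorem7p1 (R S T : finRack) :
  connected_rack R -> connected_rack S ->
  (exists t : T, rop t t = t) ->
  rack_isomorphic (prod_rack R T) (prod_rack S T) ->
  rack_isomorphic R S.
Proof.
move=> _ _ [t tt] [f isof].
pose diag : {set R * R} := [set p | p.1 == p.2].
have : 0 < #|homs_ker_eq S diag|.
  rewrite -(card_homs_ker_eq_eq (card_homs_ker_sub_cancel tt isof)).
  apply/card_gt0P; exists [ffun x => x]; rewrite inE; apply/andP; split.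
    by apply/rack_homP => a b; rewrite !ffunE.
  by apply/eqP/setP => p; rewrite !inE !ffunE.
case/card_gt0P => h h_diag; have h_inj := homs_ker_eq_diag_inj h_diag.
have card_RS : #|R| = #|S|.
  have [f_bij _] := isof; apply/eqP; rewrite -(eqn_pmul2r (m := #|T|)).
    by rewrite -!card_prod (bij_eq_card f_bij).
  by apply/card_gt0P; exists t.
exists h; split; first by apply: inj_card_bij h_inj _; rewrite card_RS.
by move: h_diag; rewrite inE => /andP[/rack_homP].
Qed.
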